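(* Assume the Lipschitz gradient assumption, $r_1>L_x$, $r_2>L_y$, and the dual K\L{} assumption with exponent $\theta\in(0,1)$. If $(x,y)\in\mathcal X\times\mathcal Y$ is an $\epsilon$-GS, then $x$ is an $\mathcal O(\epsilon^{\min\{1,\frac{1}{2\theta}\}})$-OS, i.e. $\|x^*(x)-x\|\le\mathcal O(\epsilon^{\min\{1,\frac1{2\theta}\}})$, where the constant depends only on the problem data and $r_1,r_2$.
   Context: Let $\mathcal X\subset\mathbb R^n$, $\mathcal Y\subset\mathbb R^d$ be nonempty convex compact sets and $f:\mathbb R^n\times\mathbb R^d\to\mathbb R$ continuously differentiable. Lipschitz gradient assumption: there are $L_x,L_y>0$ such that for all $x,x'\in\mathcal X$, $y,y'\in\mathcal Y$, $\|\nabla_x f(x,y)-\nabla_x f(x',y')\|\le L_x(\|x-x'\|+\|y-y'\|)$ and $\|\nabla_y f(x,y)-\nabla_y f(x',y')\|\le L_y(\|x-x'\|+\|y-y'\|)$. Let $N_{\mathcal X}(x)=\partial\mathbf 1_{\mathcal X}(x)$ denote the normal cone. A point $(x,y)\in\mathcal X\times\mathcal Y$ is an $\epsilon$-game stationary point ($\epsilon$-GS) if $\mathrm{dist}(0,\nabla_xf(x,y)+N_{\mathcal X}(x))\le\epsilon$ and $\mathrm{dist}(0,-\nabla_yf(x,y)+N_{\mathcal Y}(y))\le\epsilon$. For $z\in\mathbb R^n$ let $x^*(z)=\arg\min_{x\in\mathcal X}\max_{y\in\mathcal Y}\{f(x,y)+\frac{r_1}{2}\|x-z\|^2\}$ (equivalently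 the proximal point of $\max_{y\in\mathcal Y}f(\cdot,y)/r_1+\mathbf 1_{\mathcal X}$ at $z$); $z$ is an $\epsilon$-optimization stationary point ($\epsilon$-OS) if $\|x^*(z)-z\|\le\epsilon$. Dual K\L{} assumption: for every $x\in\mathcal X$, $\max_{y\in\mathcal Y}f(x,y)$ is attained and finite, and there exist $\tau>0$, $\theta\in(0,1)$ with $(\max_{y'\in\mathcal Y}f(x,y')-f(x,y))^\theta\le\frac1\tau\mathrm{dist}(0,-\nabla_yf(x,y)+N_{\mathcal Y}(y))$ for all $x\in\mathcal X$, $y\in\mathcal Y$. *)

From HB Require Import structures.
From mathcomp Require Import all_boot all_order all_algebra.
From mathcomp Require Import all_classical all_reals all_analysis.
Set Implicit Arguments. Unset Strict Implicit. Unset Printing Implicit Defensive.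
Import Order.TTheory GRing.Theory Num.Theory.
Import numFieldNormedType.Exports.
Local Open Scope classical_set_scope.
Local Open Scope ring_scope.

Section Defs.
Variable R : realType.

Definition dotv (n : nat) (u v : 'rV[R]_n) : R := \sum_(i < n) u ord0 i * v ord0 i.
Definition enorm (n : nat) (u : 'rV[R]_n) : R := Num.sqrt (dotv u u).

(* normal cone N_C(x) = subdifferential of the indicator of C at x
   (empty when x is not in C) *)
Definition normal_cone (n : nat) (C : set 'rV[R]_n) (x : 'rV[R]_n) : set 'rV[R]_n :=
  [set w | C x /\ forall c, C c -> dotv w (c - x) <= 0].

Definition dist0 (n : nat) (A : set 'rV[R]_n) : R := inf [set enorm a | a in A].

Definition C1_with_grad (n d : nat) (f : 'rV[R]_n -> 'rV[R]_d -> R)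
  (gx : 'rV[R]_n -> 'rV[R]_d -> 'rV[R]_n) (gy : 'rV[R]_n -> 'rV[R]_d -> 'rV[R]_d) : Prop :=
  (forall x y (e : R), 0 < e -> exists2 del : R, 0 < del &
     forall hx hy, enorm hx + enorm hy < del ->
       `| f (x + hx) (y + hy) - f x y - dotv (gx x y) hx - dotv (gy x y) hy |
         <= e * (enorm hx + enorm hy)) /\
  (forall x y (e : R), 0 < e -> exists2 del : R, 0 < del &
     forall x' y', enorm (x' - x) + enorm (y' - y) < del ->
       enorm (gx x' y' - gx x y) + enorm (gy x' y' - gy x y) < e).

Definition lipschitz_grad (n d : nat) (X : set 'rV[R]_n) (Y : set 'rV[R]_d)
  (gx : 'rV[R]_n -> 'rV[R]_d -> 'rV[R]_n) (gy : 'rV[R]_n -> 'rV[R]_d -> 'rV[R]_d)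
  (Lx Ly : R) : Prop :=
  0 < Lx /\ 0 < Ly /\
  forall x x' y y', X x -> X x' -> Y y -> Y y' ->
    enorm (gx x y - gx x' y') <= Lx * (enorm (x - x') + enorm (y - y')) /\
    enorm (gy x y - gy x' y') <= Ly * (enorm (x - x') + enorm (y - y')).

Definition maxval (n d : nat) (Y : set 'rV[R]_d) (f : 'rV[R]_n -> 'rV[R]_d -> R)
  (x : 'rV[R]_n) : R := sup [set f x y | y in Y].

Definition dual_KL (n d : nat) (X : set 'rV[R]_n) (Y : set 'rV[R]_d)
  (f : 'rV[R]_n -> 'rV[R]_d -> R) (gy : 'rV[R]_n -> 'rV[R]_d -> 'rV[R]_d)
  (tau theta : R) : Prop :=
  0 < tau /\ 0 < theta < 1 /\
  (forall x, X x -> exists2 ym, Y ym & forall y, Y y -> f x y <= f x ym) /\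
  (forall x y, X x -> Y y ->
     (maxval Y f x - f x y) `^ theta
       <= tau^-1 * dist0 [set - gy x y + w | w in normal_cone Y y]).

Definition eps_GS (n d : nat) (X : set 'rV[R]_n) (Y : set 'rV[R]_d)
  (gx : 'rV[R]_n -> 'rV[R]_d -> 'rV[R]_n) (gy : 'rV[R]_n -> 'rV[R]_d -> 'rV[R]_d)
  (eps : R) (x : 'rV[R]_n) (y : 'rV[R]_d) : Prop :=
  X x /\ Y y /\
  dist0 [set gx x y + w | w in normal_cone X x] <= eps /\
  dist0 [set - gy x y + w | w in normal_cone Y y] <= eps.

Definition is_xstar (n d : nat) (X : set 'rV[R]_n) (Y : set 'rV[R]_d)
  (f : 'rV[R]_n -> 'rV[R]_d -> R) (r1 : R) (z xs : 'rV[R]_n) : Prop :=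
  X xs /\ forall x, X x ->
    maxval Y (fun u v => f u v + r1 / 2 * enorm (u - z) ^+ 2) xs
      <= maxval Y (fun u v => f u v + r1 / 2 * enorm (u - z) ^+ 2) x.

End Defs.

(* Let (x, y) be an eps-game-stationary point, xs = x^*(x) the proximal point of
   max_y f(., y) at x, and D = ||xs - x||.  Three estimates give a quadratic
   inequality in D:
   - the descent lemma (Lx-Lipschitz x-gradient, X convex):
       f(xs, y) >= f(x, y) + <grad_x f(x, y), xs - x> - Lx/2 D^2;
   - the x-part of eps-GS and Cauchy-Schwarz:  <grad_x f(x, y), xs - x> >= - eps D;
   - the dual KL inequality and the y-part of eps-GS:
       max_y f(x, .) - f(x, y) <= (eps / tau)^(1/theta).
   As xs minimizes the proximal max-function, whose value at x is max_y f(x, .),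
   we get (r1 - Lx)/2 D^2 <= (eps / tau)^(1/theta) + eps D, whence
   D = O(eps + eps^(1/(2 theta))) = O(eps^min(1, 1/(2 theta))) for eps < 1; for
   eps >= 1 the diameter of the compact set X bounds D. *)

From HB Require Import structures.
From mathcomp Require Import all_boot all_order all_algebra.
From mathcomp Require Import all_classical all_reals all_analysis.
From mathcomp Require Import ring lra.
Import Order.TTheory GRing.Theory Num.Theory.
Import numFieldNormedType.Exports.
Local Open Scope classical_set_scope.
Local Open Scope ring_scope.
Set Implicit Arguments. Unset Strict Implicit.

Section EuclideanSpace.
Variables (R : realType) (n : nat).
Implicit Types u v w : 'rV[R]_n.

Lemma dotvC u v : dotv u v = dotv v u.
Proof. by apply: eq_bigr => i _; rewrite mulrC. Qed.

Lemma dotvDl u v w : dotv (u + v) w = dotv u w + dotv v w.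
Proof. by rewrite /dotv -big_split; apply: eq_bigr => i _; rewrite mxE mulrDl. Qed.

Lemma dotvZl (a : R) u v : dotv (a *: u) v = a * dotv u v.
Proof. by rewrite /dotv mulr_sumr; apply: eq_bigr => i _; rewrite mxE mulrA. Qed.

Lemma dotvZr (a : R) u v : dotv v (a *: u) = a * dotv v u.
Proof. by rewrite dotvC dotvZl dotvC. Qed.

Lemma dotvNl u v : dotv (- u) v = - dotv u v.
Proof. by rewrite -scaleN1r dotvZl mulN1r. Qed.

Lemma dotvBl u v w : dotv (u - v) w = dotv u w - dotv v w.
Proof. by rewrite dotvDl dotvNl. Qed.

Lemma dotvBr u v w : dotv w (u - v) = dotv w u - dotv w v.
Proof. by rewrite !(dotvC w) dotvBl. Qed.

Lemma dotv0l u : dotv 0 u = 0.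
Proof. by rewrite -(scale0r 0) dotvZl mul0r. Qed.

Lemma dotv0r u : dotv u 0 = 0.
Proof. by rewrite dotvC dotv0l. Qed.

Lemma dotv_ge0 u : 0 <= dotv u u.
Proof. by apply: sumr_ge0 => i _; rewrite -expr2 sqr_ge0. Qed.

Lemma enorm_ge0 u : 0 <= enorm u.
Proof. exact: sqrtr_ge0. Qed.

Lemma enorm0 : enorm (0 : 'rV[R]_n) = 0.
Proof. by rewrite /enorm dotv0l sqrtr0. Qed.

Lemma enormZ (a : R) u : enorm (a *: u) = `|a| * enorm u.
Proof. by rewrite /enorm dotvZl dotvZr mulrA -expr2 sqrtrM ?sqr_ge0 // sqrtr_sqr. Qed.

Lemma enormN u : enorm (- u) = enorm u.
Proof. by rewrite -scaleN1r enormZ normrN normr1 mul1r. Qed.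

(* Cauchy-Schwarz, from the nonnegativity of the quadratic l |-> ||u - l v||^2. *)
Lemma cauchy_schwarz u v : dotv u v <= enorm u * enorm v.
Proof.
set B := dotv u v; set A := dotv u u; set C := dotv v v.
have quad l : 0 <= A - 2 * l * B + l ^+ 2 * C.
  have := dotv_ge0 (u - l *: v).
  rewrite dotvBl !dotvBr !dotvZl !dotvZr (dotvC v u) -/A -/B -/C.
  by congr (0 <= _); ring.
have [B_le0|B_gt0] := leP B 0.
  by apply: le_trans B_le0 _; rewrite mulr_ge0 // enorm_ge0.
have A_ge0 : 0 <= A by apply: dotv_ge0.
have [C0|C_neq0] := eqVneq C 0.
  have := quad ((A + 1) / (2 * B)); rewrite C0 mulr0 addr0.
  have -> : A - 2 * ((A + 1) / (2 * B)) * B = -1 by field; rewrite gt_eqF.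
  by rewrite oppr_ge0 leNgt ltr01.
have C_gt0 : 0 < C by rewrite lt_def C_neq0 dotv_ge0.
have discr : B ^+ 2 <= A * C.
  have := quad (B / C).
  have -> : A - 2 * (B / C) * B + (B / C) ^+ 2 * C = A - B ^+ 2 / C.
    by field; rewrite gt_eqF.
  by rewrite subr_ge0 ler_pdivrMr.
rewrite /enorm -sqrtrM // -(ger0_norm (ltW B_gt0)) -sqrtr_sqr.
by rewrite ler_sqrt // mulr_ge0 // dotv_ge0.
Qed.

Lemma cauchy_schwarzN u v : - (enorm u * enorm v) <= dotv u v.
Proof. by rewrite lerNl -dotvNl -(enormN u) cauchy_schwarz. Qed.

Lemma convex_segment (X : set 'rV[R]_n) u v (t : R) :
  convex_set X -> X u -> X v -> 0 <= t <= 1 -> X (u + t *: (v - u)).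
Proof.
move=> convX Xu Xv /andP[t_ge0 t_le1].
have := convX v u (Itv01 t_ge0 t_le1); rewrite !inE => /(_ Xv Xu).
congr X; rewrite /conv /= /unstable.onem scalerBl scale1r scalerBr.
by rewrite addrCA.
Qed.

Lemma compact_diameter_bound (X : set 'rV[R]_n) :
  compact X -> exists M : R, 0 <= M /\ forall a b, X a -> X b -> enorm (a - b) <= M.
Proof.
move=> compX.
have [B [_ boundB]] := compact_bounded compX.
set B' := `|B| + 1.
have B'_ge0 : 0 <= B' by rewrite addr_ge0.
have entry_bound x i : X x -> `|x ord0 i| <= B'.
  move=> Xx; apply: le_trans (boundB B' _ x Xx); last first.
    by rewrite (le_lt_trans (ler_norm B)) // ltrDl.
  have := le_bigmax 0 (fun ij : 'I_1 * 'I_n => `|x ij.1 ij.2|) (ord0, i).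
  by rewrite -mx_normrE.
exists (Num.sqrt (\sum_(i < n) (B' + B') ^+ 2)); split; first exact: sqrtr_ge0.
move=> a b Xa Xb; rewrite /enorm ler_sqrt; last by apply: sumr_ge0 => i _; apply: sqr_ge0.
apply: ler_sum => i _; rewrite !mxE -expr2 -real_normK ?num_real //.
rewrite lerXn2r ?nnegrE ?normr_ge0 ?addr_ge0 //.
by apply: le_trans (ler_normB _ _) _; apply: lerD; apply: entry_bound.
Qed.

End EuclideanSpace.

Lemma is_derive_from_increment (R : realType) (F : R -> R) (t L : R) :
  (forall e : R, 0 < e -> exists2 del : R, 0 < del & forall s : R, s != 0 ->
     `|s| < del -> `|F (s + t) - F t - s * L| <= e * `|s|) ->
  is_derive t 1 F L.
Proof.
move=> approx.
have slopes : (fun h => h^-1 *: ((F \o shift t) (h *: 1) - F t)) @ 0^' --> L.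
  apply/cvgrPdist_le => e e_gt0.
  have [del del_gt0 approx_e] := approx e e_gt0.
  exists del => //= s /= s_near s_neq0.
  have s_lt : `|s| < del by move: s_near; rewrite /ball /= sub0r normrN.
  have := approx_e s s_neq0 s_lt; rewrite [s%:A]mulr1.
  have -> : L - s^-1 *: (F (s + t) - F t) = - s^-1 * (F (s + t) - F t - s * L).
    by rewrite /GRing.scale /=; field.
  rewrite normrM normrN normrV ?unitfE // => err.
  by rewrite mulrC ler_pdivrMr ?normr_gt0.
by apply: DeriveDef; [apply/cvg_ex; exists L | apply: cvg_lim].
Qed.

Section DescentLemma.
Variables (R : realType) (n d : nat) (f : 'rV[R]_n -> 'rV[R]_d -> R).
Variables (gx : 'rV[R]_n -> 'rV[R]_d -> 'rV[R]_n) (gy : 'rV[R]_n -> 'rV[R]_d -> 'rV[R]_d).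
Hypothesis C1f : C1_with_grad f gx gy.

Lemma is_derive_along_line (u h : 'rV[R]_n) (y : 'rV[R]_d) (t : R) :
  is_derive t 1 (fun s => f (u + s *: h) y) (dotv (gx (u + t *: h) y) h).
Proof.
have [frechet _] := C1f.
apply: is_derive_from_increment => e e_gt0.
set p := u + t *: h.
have h1_gt0 : 0 < enorm h + 1 by rewrite ltr_wpDl ?enorm_ge0.
have [del del_gt0 frechet_e] := frechet p y (e / (enorm h + 1)) (divr_gt0 e_gt0 h1_gt0).
exists (del / (enorm h + 1)); first by rewrite divr_gt0.
move=> s _ s_small.
have step_small : enorm (s *: h) + enorm (0 : 'rV[R]_d) < del.
  rewrite enorm0 addr0 enormZ.
  apply: le_lt_trans (_ : `|s| * (enorm h + 1) < del); first by rewrite ler_wpM2l ?lerDl.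
  by rewrite -ltr_pdivlMr.
have := frechet_e _ _ step_small.
rewrite !addr0 dotv0r subr0 dotvZr enorm0 addr0 enormZ.
have -> : u + (s + t) *: h = p + s *: h by rewrite /p scalerDl addrA addrAC.
move=> err; apply: le_trans err _.
apply: le_trans (_ : e / (enorm h + 1) * (`|s| * (enorm h + 1)) <= _).
  apply: ler_wpM2l; first by rewrite divr_ge0 ?ltW.
  by apply: ler_wpM2l; rewrite ?lerDl.
by rewrite mulrCA divfK ?gt_eqF // mulrC.
Qed.

Variables (X : set 'rV[R]_n) (Y : set 'rV[R]_d) (Lx Ly : R).
Hypotheses (convX : convex_set X) (lipg : lipschitz_grad X Y gx gy Lx Ly).

(* Proof: s |-> f(u + s h, y) + Lx/2 s^2 ||h||^2 - s <grad_x f(u, y), h>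
   has nonnegative derivative on [0, 1], hence increases from s = 0 to s = 1. *)
Lemma descent_lemma u v y : X u -> X v -> Y y ->
  f u y + dotv (gx u y) (v - u) - Lx / 2 * enorm (v - u) ^+ 2 <= f v y.
Proof.
move=> Xu Xv Yy.
have [Lx_gt0 [_ lip]] := lipg.
set h := v - u; set a := dotv (gx u y) h; set c := enorm h ^+ 2.
pose g s := f (u + s *: h) y.
pose q s := Lx / 2 * c * s ^+ 2 - a * s.
have dphi (t : R) : is_derive t 1 (g + q) (dotv (gx (u + t *: h) y) h + (Lx * c * t - a)).
  have dg := is_derive_along_line u h y t.
  apply: is_derive_eq.
  by rewrite /GRing.scale /=; congr (_ + _); field.
have slope_ge0 (t : R) : t \in `]0, 1[ -> 0 <= derive1 (g + q) t.
  move=> t01; rewrite derive1E; have [_ ->] := dphi t.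
  have t_ge0 : 0 <= t by rewrite ltW // (itvP t01).
  have Xut : X (u + t *: h).
    by apply: convex_segment => //; rewrite t_ge0 ltW // (itvP t01).
  have [lip_t _] := lip _ _ _ _ Xut Xu Yy Yy.
  rewrite subrr enorm0 addr0 addrAC subrr add0r enormZ (ger0_norm t_ge0) in lip_t.
  have cs := cauchy_schwarzN (gx (u + t *: h) y - gx u y) h.
  have lip_slope : enorm (gx (u + t *: h) y - gx u y) * enorm h <= Lx * t * c.
    by apply: le_trans (ler_wpM2r (enorm_ge0 h) lip_t) _; rewrite /c expr2 !mulrA.
  rewrite dotvBl -/a in cs; lra.
have der (t : R) : derivable (g + q) t 1 by case: (dphi t).
have cont : {within `[0, 1], continuous (g + q)}.
  by apply: derivable_within_continuous => t _; apply: der.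
have mono : g 0 + q 0 <= g 1 + q 1.
  by apply: (ger0_derive1_ndecr (fun t _ => der t) slope_ge0 cont); rewrite ?ler01.
rewrite /g /q scale0r addr0 scale1r /h (addrC u) subrK -/h in mono; lra.
Qed.
End DescentLemma.

Lemma le_sup_image (R : realType) (T : Type) (Y : set T) (F : T -> R) (ym y : T) :
  (forall v, Y v -> F v <= F ym) -> Y y -> F y <= sup [set F v | v in Y].
Proof.
move=> ym_max Yy; apply: sup_upper_bound; last by exists y.
split; first by exists (F y), y.
by exists (F ym) => _ [v Yv <-]; apply: ym_max.
Qed.

Lemma powR_le_inv (R : realType) (a b p : R) :
  0 <= a -> 0 <= b -> 0 < p -> a `^ p <= b -> a <= b `^ p^-1.
Proof.
move=> a_ge0 b_ge0 p_gt0 ab.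
rewrite -[a in a <= _](powRr1 a_ge0) -(mulfV (lt0r_neq0 p_gt0)) powRrM.
apply: ge0_ler_powR => //; first by rewrite invr_ge0 ltW.
by rewrite nnegrE powR_ge0.
Qed.

Lemma dual_KL_gap (R : realType) (n d : nat) (X : set 'rV[R]_n) (Y : set 'rV[R]_d)
  (f : 'rV[R]_n -> 'rV[R]_d -> R) (gy : 'rV[R]_n -> 'rV[R]_d -> 'rV[R]_d)
  (tau theta eps : R) (x : 'rV[R]_n) (y : 'rV[R]_d) :
  dual_KL X Y f gy tau theta -> X x -> Y y -> 0 <= eps ->
  dist0 [set - gy x y + w | w in normal_cone Y y] <= eps ->
  maxval Y f x - f x y <= (tau^-1 * eps) `^ theta^-1.
Proof.
move=> [tau_gt0 [/andP[theta_gt0 _] [attain KL]]] Xx Yy eps_ge0 stat_y.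
have [ym _ ym_max] := attain x Xx.
have gap_ge0 : 0 <= maxval Y f x - f x y.
  by rewrite subr_ge0; exact: (le_sup_image (F := f x) ym_max Yy).
apply: powR_le_inv => //; first by apply: mulr_ge0; rewrite // invr_ge0 ltW.
apply: le_trans (KL x y Xx Yy) _.
by rewrite ler_wpM2l // invr_ge0 ltW.
Qed.

Lemma normal_cone_pairing (R : realType) (n : nat) (X : set 'rV[R]_n)
  (g x z : 'rV[R]_n) (eps : R) :
  X x -> X z -> dist0 [set g + w | w in normal_cone X x] <= eps ->
  - (eps * enorm (z - x)) <= dotv g (z - x).
Proof.
move=> Xx Xz stat_x.
set D := enorm (z - x); have D_ge0 : 0 <= D := enorm_ge0 _.
apply/ler_addgt0Pr => e e_gt0.
set del := e / (D + 1).
have del_gt0 : 0 < del by rewrite divr_gt0 // ltr_wpDl.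
have nonempty : [set enorm a | a in [set g + w | w in normal_cone X x]] !=set0.
  exists (enorm (g + 0)), (g + 0) => //.
  by exists 0 => //; split => // c _; rewrite dotv0l.
have close : inf [set enorm a | a in [set g + w | w in normal_cone X x]] < eps + del.
  by apply: le_lt_trans stat_x _; rewrite ltrDl.
have [_ [_ [w [_ w_normal] <-] <-] w_close] := inf_lt nonempty close.
have := w_normal z Xz.
have := cauchy_schwarzN (g + w) (z - x); rewrite dotvDl -/D.
have : enorm (g + w) * D <= (eps + del) * D by apply: ler_wpM2r => //; apply: ltW.
have : del * D <= e.
  by rewrite /del mulrAC ler_pdivrMr ?ltr_wpDl // ler_pM2l // lerDl.
lra.
Qed.

Section ProximalGrowth.
Variables (R : realType) (n d : nat) (X : set 'rV[R]_n) (Y : set 'rV[R]_d).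
Variables (f : 'rV[R]_n -> 'rV[R]_d -> R).
Variables (gx : 'rV[R]_n -> 'rV[R]_d -> 'rV[R]_n) (gy : 'rV[R]_n -> 'rV[R]_d -> 'rV[R]_d).
Variables (Lx Ly r1 tau theta : R).
Hypotheses (convX : convex_set X) (C1f : C1_with_grad f gx gy).
Hypotheses (lipg : lipschitz_grad X Y gx gy Lx Ly) (KLf : dual_KL X Y f gy tau theta).

Lemma prox_maxval_center (x : 'rV[R]_n) :
  maxval Y (fun u v => f u v + r1 / 2 * enorm (u - x) ^+ 2) x = maxval Y f x.
Proof.
rewrite /maxval /= subrr enorm0 expr0n /= mulr0.
by under eq_fun do rewrite addr0.
Qed.

Lemma proximal_quadratic_growth (eps : R) (x : 'rV[R]_n) (y : 'rV[R]_d) (xs : 'rV[R]_n) :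
  0 <= eps -> eps_GS X Y gx gy eps x y -> is_xstar X Y f r1 x xs ->
  (r1 - Lx) / 2 * enorm (xs - x) ^+ 2
    <= (tau^-1 * eps) `^ theta^-1 + eps * enorm (xs - x).
Proof.
move=> eps_ge0 [Xx [Yy [stat_x stat_y]]] [Xxs xs_min].
have [_ [_ [attain _]]] := KLf.
set D := enorm (xs - x).
have gap := dual_KL_gap KLf Xx Yy eps_ge0 stat_y.
have descent := descent_lemma C1f convX lipg Xx Xxs Yy.
have pairing := normal_cone_pairing Xx Xxs stat_x.
have prox_min := xs_min x Xx; rewrite prox_maxval_center in prox_min.
have prox_lower : f xs y + r1 / 2 * D ^+ 2
    <= maxval Y (fun u v => f u v + r1 / 2 * enorm (u - x) ^+ 2) xs.
  have [ym _ ym_max] := attain xs Xxs.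
  apply: (le_sup_image (F := fun v => f xs v + r1 / 2 * D ^+ 2)) Yy => v Yv.
  by rewrite lerD2r; apply: ym_max.
rewrite -/D in descent pairing; lra.
Qed.

End ProximalGrowth.

(* Solving A D^2 <= W^2 + e D for D >= 0: according to which term on the right
   dominates, D <= 2 e / A or D <= sqrt(2 / A) W. *)
Lemma quadratic_inequality_bound (R : realType) (A e W D : R) :
  0 < A -> 0 <= e -> 0 <= W -> 0 <= D -> A * D ^+ 2 <= W ^+ 2 + e * D ->
  D <= 2 / A * e + Num.sqrt (2 / A) * W.
Proof.
move=> A_gt0 e_ge0 W_ge0 D_ge0 quad.
have root_ge0 : 0 <= Num.sqrt (2 / A) * W by rewrite mulr_ge0 ?sqrtr_ge0.
have lin_ge0 : 0 <= 2 / A * e by rewrite mulr_ge0 // divr_ge0 // ltW.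
have [W_small|W_large] := leP (W ^+ 2) (e * D).
- suff : D <= 2 / A * e by lra.
  rewrite mulrAC ler_pdivlMr // mulrC.
  have [->|D_neq0] := eqVneq D 0; first by rewrite mulr0 mulr_ge0.
  have D_gt0 : 0 < D by rewrite lt_def D_neq0.
  by rewrite -(ler_pM2r D_gt0) -mulrA -expr2; lra.
- have root_sq : D ^+ 2 <= (Num.sqrt (2 / A) * W) ^+ 2.
    rewrite exprMn sqr_sqrtr; last by rewrite divr_ge0 // ltW.
    by rewrite mulrAC ler_pdivlMr // mulrC; lra.
  by move: root_sq; rewrite ler_sqr ?nnegrE //; lra.
Qed.

Lemma le_powR_min_bound (R : realType) (a b M D e q : R) :
  0 <= a -> 0 <= b -> 0 <= M -> 0 < e -> 0 < q ->
  D <= a * e + b * e `^ q -> D <= M -> D <= (a + b + M) * e `^ Num.min 1 q.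
Proof.
move=> a_ge0 b_ge0 M_ge0 e_gt0 q_gt0 D_small D_M.
have ep_ge0 : 0 <= e `^ Num.min 1 q := powR_ge0 _ _.
have [e_ge1|e_lt1] := leP 1 e.
  have : 1 <= e `^ Num.min 1 q by rewrite -[leLHS](powRr0 e) ler_powR // le_min ler01 ltW.
  nra.
have e01 : 0 < e <= 1 by rewrite e_gt0 ltW.
have : e <= e `^ Num.min 1 q by rewrite -{1}(powRr1 (ltW e_gt0)) ger_powR // ge_min lexx.
have : e `^ q <= e `^ Num.min 1 q by rewrite ger_powR // ge_min lexx orbT.
nra.
Qed.

Unset Implicit Arguments.

Theorem mainTheorem8 (R : realType) (n d : nat)
  (X : set 'rV[R]_n) (Y : set 'rV[R]_d)
  (f : 'rV[R]_n -> 'rV[R]_d -> R)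
  (gx : 'rV[R]_n -> 'rV[R]_d -> 'rV[R]_n) (gy : 'rV[R]_n -> 'rV[R]_d -> 'rV[R]_d)
  (Lx Ly r1 r2 tau theta : R) :
  X !=set0 -> convex_set X -> compact X ->
  Y !=set0 -> convex_set Y -> compact Y ->
  C1_with_grad f gx gy ->
  lipschitz_grad X Y gx gy Lx Ly ->
  Lx < r1 -> Ly < r2 ->
  dual_KL X Y f gy tau theta ->
  exists2 C : R, 0 < C &
    forall (eps : R) (x : 'rV[R]_n) (y : 'rV[R]_d), 0 < eps ->
      eps_GS X Y gx gy eps x y ->
      forall xs, is_xstar X Y f r1 x xs ->
        enorm (xs - x) <= C * eps `^ (Num.min 1 (1 / (2 * theta))).
Proof.
move=> _ convX compX _ _ _ C1f lipg Lx_lt_r1 _ KLf.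
have [Dm [Dm_ge0 diamX]] := compact_diameter_bound compX.
have [tau_gt0 [/andP[theta_gt0 _] _]] := KLf.
set A := (r1 - Lx) / 2; have A_gt0 : 0 < A by rewrite divr_gt0 // subr_gt0.
set q := 1 / (2 * theta); have q_gt0 : 0 < q by rewrite divr_gt0 // mulr_gt0.
set K := Num.sqrt (2 / A) * tau^-1 `^ q.
have K_ge0 : 0 <= K by rewrite mulr_ge0 ?sqrtr_ge0 ?powR_ge0.
exists (2 / A + K + Dm); first by rewrite ltr_wpDr // ltr_wpDr // divr_gt0.
move=> eps x y eps_gt0 GS xs xstar.
have [[Xx _] [Xxs _]] := (GS, xstar).
apply: le_powR_min_bound => //; [by rewrite divr_ge0 ?ltW | | exact: diamX].
have growth := proximal_quadratic_growth convX C1f lipg KLf (ltW eps_gt0) GS xstar.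
have W_sq : (tau^-1 * eps) `^ theta^-1 = ((tau^-1 * eps) `^ q) ^+ 2.
  by rewrite -powR_mulrn ?powR_ge0 // -powRrM /q; congr (_ `^ _); field; rewrite gt_eqF.
rewrite W_sq in growth.
have tau_eps : (tau^-1 * eps) `^ q = tau^-1 `^ q * eps `^ q.
  by apply: powRM; [rewrite invr_ge0 ltW | exact: ltW].
have := quadratic_inequality_bound A_gt0 (ltW eps_gt0) (powR_ge0 _ _) (enorm_ge0 _) growth.
by rewrite tau_eps mulrA.
Qed.
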